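(* Let $f:M^2\to\mathbb{R}^3$ be a translating soliton with height function $u=\langle f,\operatorname{v}\rangle$. On the open set $M^2\setminus\operatorname{Crit}(u)$ where $\nabla u\neq0$, the vector field $$W=-\frac{\nabla H+H\nabla u}{|\nabla u|^2}=-\frac{\nabla(e^uH)}{e^u|\nabla u|^2}$$ is divergence free, and the Gauss curvature satisfies $K=\langle\nabla H,W\rangle=\operatorname{div}(HW)$.
   Context: A translating soliton is an immersion $f:M^2\to\mathbb{R}^3$ of an oriented surface with unit normal $\xi$ whose scalar mean curvature $H$ (trace of $A(v,w)=-\langle\vec A(v,w),\xi\rangle$, $\vec A$ the second fundamental form) satisfies $H=-\langle\operatorname{v},\xi\rangle$ with $\operatorname{v}=\operatorname{e}_3$. $\nabla$, $\operatorname{div}$ are taken with respect to the induced metric, $K$ is its Gauss curvature, and $\operatorname{Crit}(u)=\{\nabla u=0\}=\{H^2=1\}$. *)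

(* classical reals.  Local-coordinate differential geometry of
   a parametrized surface f : U (open in R^2) -> R^3. *)
From Stdlib Require Import Reals ClassicalEpsilon.
Open Scope R_scope.

(* indices of surface coordinates (s,t) and of R^3 components *)
Inductive ix := i1 | i2.
Inductive i3 := c1 | c2 | c3.

Definition sum2 (h : ix -> R) : R := h i1 + h i2.
Definition sum3 (h : i3 -> R) : R := h c1 + h c2 + h c3.

(* partial derivatives (value chosen by epsilon; meaningful where they exist) *)
Definition Dx (F : R -> R -> R) (x y : R) : R :=
  epsilon (inhabits 0) (fun l => derivable_pt_lim (fun s => F s y) x l).
Definition Dy (F : R -> R -> R) (x y : R) : R :=
  epsilon (inhabits 0) (fun l => derivable_pt_lim (fun t => F x t) y l).
Definition D (i : ix) (F : R -> R -> R) : R -> R -> R :=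
  match i with i1 => Dx F | i2 => Dy F end.

Fixpoint Dl (l : list ix) (F : R -> R -> R) : R -> R -> R :=
  match l with nil => F | cons i l' => D i (Dl l' F) end.

Definition open2 (U : R -> R -> Prop) : Prop :=
  forall x y, U x y -> exists r, 0 < r /\
    forall x' y', Rabs (x' - x) < r -> Rabs (y' - y) < r -> U x' y'.

Definition continuous2_at (F : R -> R -> R) (x y : R) : Prop :=
  forall eps, 0 < eps -> exists del, 0 < del /\
    forall x' y', Rabs (x' - x) < del -> Rabs (y' - y) < del ->
      Rabs (F x' y' - F x y) < eps.

Definition smooth_on (U : R -> R -> Prop) (F : R -> R -> R) : Prop :=
  forall l x y, U x y ->
    (exists a, derivable_pt_lim (fun s => Dl l F s y) x a) /\
    (exists b, derivable_pt_lim (fun t => Dl l F x t) y b) /\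
    continuous2_at (Dl l F) x y.

Definition surf := i3 -> R -> R -> R.

Definition dot3 (a b : i3 -> R) : R := sum3 (fun k => a k * b k).
Definition cross3 (a b : i3 -> R) (k : i3) : R :=
  match k with
  | c1 => a c2 * b c3 - a c3 * b c2
  | c2 => a c3 * b c1 - a c1 * b c3
  | c3 => a c1 * b c2 - a c2 * b c1
  end.

Definition metric (f : surf) (i j : ix) (x y : R) : R :=
  dot3 (fun k => D i (f k) x y) (fun k => D j (f k) x y).
Definition gdet (f : surf) (x y : R) : R :=
  metric f i1 i1 x y * metric f i2 i2 x y - metric f i1 i2 x y ^ 2.
Definition ginv (f : surf) (i j : ix) (x y : R) : R :=
  match i, j with
  | i1, i1 => metric f i2 i2 x y / gdet f x y
  | i2, i2 => metric f i1 i1 x y / gdet f x y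
  | _, _ => - metric f i1 i2 x y / gdet f x y
  end.

(* immersion: df injective, i.e. f_s x f_t <> 0 *)
Definition normal_raw (f : surf) (k : i3) (x y : R) : R :=
  cross3 (fun m => D i1 (f m) x y) (fun m => D i2 (f m) x y) k.
Definition immersion_on (U : R -> R -> Prop) (f : surf) : Prop :=
  forall x y, U x y -> ~ (forall k, normal_raw f k x y = 0).

(* unit normal xi (orientation induced by the coordinates) *)
Definition unit_normal (f : surf) (k : i3) (x y : R) : R :=
  normal_raw f k x y /
    sqrt (dot3 (fun m => normal_raw f m x y) (fun m => normal_raw f m x y)).

(* scalar second fundamental form A(d_i,d_j) = - < vecA(d_i,d_j), xi >
   = - < f_ij, xi > *)
Definition sff (f : surf) (i j : ix) (x y : R) : R :=
  - dot3 (fun k => D i (D j (f k)) x y) (fun k => unit_normal f k x y).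

Definition mean_curv (f : surf) (x y : R) : R :=
  sum2 (fun i => sum2 (fun j => ginv f i j x y * sff f i j x y)).

(* translating soliton with velocity v = e_3 : H = - < e_3, xi > *)
Definition translating_soliton_on (U : R -> R -> Prop) (f : surf) : Prop :=
  forall x y, U x y -> mean_curv f x y = - unit_normal f c3 x y.

Definition height (f : surf) : R -> R -> R := f c3.

Definition chr (f : surf) (k i j : ix) (x y : R) : R :=
  / 2 * sum2 (fun l => ginv f k l x y *
    (D i (metric f j l) x y + D j (metric f i l) x y - D l (metric f i j) x y)).

(* Riemann tensor: R(d_i,d_j) d_k = R^l_ijk d_l,
   R(X,Y) = nabla_X nabla_Y - nabla_Y nabla_X - nabla_[X,Y] *)
Definition riem (f : surf) (l i j k : ix) (x y : R) : R :=
  D i (chr f l j k) x y - D j (chr f l i k) x y +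
  sum2 (fun m => chr f m j k x y * chr f l i m x y - chr f m i k x y * chr f l j m x y).

Definition gauss_curv (f : surf) (x y : R) : R :=
  sum2 (fun l => metric f i1 l x y * riem f l i1 i2 i2 x y) / gdet f x y.

(* tangent vector fields, in coordinate components X = X^i d_i *)
Definition vfield := ix -> R -> R -> R.

Definition grad (f : surf) (phi : R -> R -> R) : vfield :=
  fun i x y => sum2 (fun j => ginv f i j x y * D j phi x y).
Definition inner (f : surf) (X Y : vfield) (x y : R) : R :=
  sum2 (fun i => sum2 (fun j => metric f i j x y * X i x y * Y j x y)).
Definition div (f : surf) (X : vfield) (x y : R) : R :=
  / sqrt (gdet f x y) *
    sum2 (fun i => D i (fun x' y' => sqrt (gdet f x' y') * X i x' y') x y).
Definition scal (h : R -> R -> R) (X : vfield) : vfield :=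
  fun i x y => h x y * X i x y.

Definition Wfield (f : surf) : vfield :=
  fun i x y =>
    - (grad f (mean_curv f) i x y + mean_curv f x y * grad f (height f) i x y)
    / inner f (grad f (height f)) (grad f (height f)) x y.

(* In local coordinates let N = f_s x f_t be the unnormalized normal, so |N|^2 = det g.  The
   soliton equation H = -xi_3 replaces grad H by -grad xi_3, and |grad u|^2 = 1 - xi_3^2
   = (N_1^2 + N_2^2) / |N|^2 vanishes exactly on Crit(u).  Off Crit(u) a direct computation shows
   sqrt(det g) W = (d_t theta, -d_s theta), where theta is the angle of (N_1, N_2), so div W = 0 by
   the symmetry of second derivatives.  The Gauss equation K = (h_11 h_22 - h_12^2) / (det g)^2,
   h_ij = <f_ij, N>, computed from the Christoffel symbols, turns K = <grad H, W> into an identity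
   between rational functions of the 2-jet of f; finally div(HW) = <grad H, W> + H div W. *)

From Pilot Require Import Defs.
From Stdlib Require Import Reals ClassicalEpsilon Lra Psatz.
From Coquelicot Require Coquelicot.
Open Scope R_scope.

Definition pderiv_lim (i : ix) (F : R -> R -> R) (x y a : R) : Prop :=
  match i with
  | i1 => derivable_pt_lim (fun s => F s y) x a
  | i2 => derivable_pt_lim (fun t => F x t) y a
  end.

Lemma pderiv_lim_D i F x y a : pderiv_lim i F x y a -> D i F x y = a.
Proof.
  destruct i; intro H.
  - exact (uniqueness_limite _ _ _ _
      (epsilon_spec (inhabits 0) (derivable_pt_lim (fun s => F s y) x) (ex_intro _ a H)) H).
  - exact (uniqueness_limite _ _ _ _
      (epsilon_spec (inhabits 0) (derivable_pt_lim (fun t => F x t) y) (ex_intro _ a H)) H).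
Qed.

Lemma pderiv_lim_eq i F x y a b : pderiv_lim i F x y a -> a = b -> pderiv_lim i F x y b.
Proof. intros H <-; exact H. Qed.

Lemma pderiv_lim_ext i F G x y a :
  (forall u v, F u v = G u v) -> pderiv_lim i F x y a -> pderiv_lim i G x y a.
Proof. destruct i; intro HFG; apply derivable_pt_lim_ext; intro; apply HFG. Qed.

Lemma pderiv_lim_const i c x y : pderiv_lim i (fun _ _ => c) x y 0.
Proof. destruct i; apply derivable_pt_lim_const. Qed.

Lemma pderiv_lim_plus i F G x y a b : pderiv_lim i F x y a -> pderiv_lim i G x y b ->
  pderiv_lim i (fun u v => F u v + G u v) x y (a + b).
Proof. destruct i; apply derivable_pt_lim_plus. Qed.

Lemma pderiv_lim_minus i F G x y a b : pderiv_lim i F x y a -> pderiv_lim i G x y b ->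
  pderiv_lim i (fun u v => F u v - G u v) x y (a - b).
Proof. destruct i; apply derivable_pt_lim_minus. Qed.

Lemma pderiv_lim_opp i F x y a : pderiv_lim i F x y a -> pderiv_lim i (fun u v => - F u v) x y (- a).
Proof. destruct i; apply derivable_pt_lim_opp. Qed.

Lemma pderiv_lim_mult i F G x y a b : pderiv_lim i F x y a -> pderiv_lim i G x y b ->
  pderiv_lim i (fun u v => F u v * G u v) x y (a * G x y + F x y * b).
Proof. destruct i; apply derivable_pt_lim_mult. Qed.

Lemma pderiv_lim_pow2 i F x y a : pderiv_lim i F x y a ->
  pderiv_lim i (fun u v => F u v ^ 2) x y (2 * F x y * a).
Proof.
  intro H. apply (pderiv_lim_ext i (fun u v => F u v * F u v)); [intros; ring|].
  eapply pderiv_lim_eq; [apply pderiv_lim_mult; exact H | ring].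
Qed.

Lemma pderiv_lim_div i F G x y a b : pderiv_lim i F x y a -> pderiv_lim i G x y b -> G x y <> 0 ->
  pderiv_lim i (fun u v => F u v / G u v) x y ((a * G x y - F x y * b) / (G x y * G x y)).
Proof.
  intros HF HG HG0.
  replace ((a * G x y - F x y * b) / (G x y * G x y))
    with ((a * G x y - b * F x y) / (G x y)²) by (unfold Rsqr; field; exact HG0).
  destruct i; exact (derivable_pt_lim_div _ _ _ _ _ HF HG HG0).
Qed.

Lemma pderiv_lim_comp i F g x y a b : pderiv_lim i F x y a -> derivable_pt_lim g (F x y) b ->
  pderiv_lim i (fun u v => g (F u v)) x y (b * a).
Proof.
  destruct i; intros HF Hg.
  - exact (derivable_pt_lim_comp (fun s => F s y) g x a b HF Hg).
  - exact (derivable_pt_lim_comp (fun t => F x t) g y a b HF Hg).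
Qed.

Lemma pderiv_lim_sqrt i F x y a : pderiv_lim i F x y a -> 0 < F x y ->
  pderiv_lim i (fun u v => sqrt (F u v)) x y (/ (2 * sqrt (F x y)) * a).
Proof. intros H Hpos. exact (pderiv_lim_comp _ _ _ _ _ _ _ H (derivable_pt_lim_sqrt _ Hpos)). Qed.

Lemma pderiv_lim_exp i F x y a : pderiv_lim i F x y a ->
  pderiv_lim i (fun u v => exp (F u v)) x y (exp (F x y) * a).
Proof. intro H. exact (pderiv_lim_comp _ _ _ _ _ _ _ H (derivable_pt_lim_exp _)). Qed.

Ltac pderiv_rule := first
  [ apply pderiv_lim_const | apply pderiv_lim_minus | apply pderiv_lim_plus
  | apply pderiv_lim_div | apply pderiv_lim_mult | apply pderiv_lim_opp
  | apply pderiv_lim_pow2 | apply pderiv_lim_sqrt | apply pderiv_lim_exp ].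

Definition near (x y : R) (P : R -> R -> Prop) : Prop :=
  exists r, 0 < r /\ forall x' y', Rabs (x' - x) < r -> Rabs (y' - y) < r -> P x' y'.

Lemma near_and x y P Q : near x y P -> near x y Q -> near x y (fun u v => P u v /\ Q u v).
Proof.
  intros [r1 [H1 P1]] [r2 [H2 P2]]. exists (Rmin r1 r2). split; [apply Rmin_pos; auto|].
  intros u v Hu Hv. split; [apply P1 | apply P2];
    eapply Rlt_le_trans; eauto; first [apply Rmin_l | apply Rmin_r].
Qed.

Lemma near_mono x y (P Q : R -> R -> Prop) :
  near x y P -> (forall u v, P u v -> Q u v) -> near x y Q.
Proof. intros [r [Hr HP]] HPQ. exists r. split; auto. Qed.

Lemma pderiv_lim_ext_near i F G x y a :
  near x y (fun u v => F u v = G u v) -> pderiv_lim i G x y a -> pderiv_lim i F x y a.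
Proof.
  intros [r [Hr HFG]].
  assert (Hball : forall z c, c - r < z < c + r -> Rabs (z - c) < r)
    by (intros z c Hz; apply Rabs_def1; lra).
  assert (H0 : Rabs (x - x) < r /\ Rabs (y - y) < r)
    by (rewrite !Rminus_diag, Rabs_R0; auto).
  destruct H0 as [Hx Hy].
  destruct i; simpl.
  - apply derivable_pt_lim_locally_ext with (a := x - r) (b := x + r); [lra|].
    intros z Hz; symmetry; apply HFG; auto.
  - apply derivable_pt_lim_locally_ext with (a := y - r) (b := y + r); [lra|].
    intros z Hz; symmetry; apply HFG; auto.
Qed.

Lemma Dl_app l c F : Dl l (D c F) = Dl (l ++ c :: nil) F.
Proof. induction l as [|i l IH]; simpl; [reflexivity | now rewrite IH]. Qed.

Lemma smooth_on_D U F c : smooth_on U F -> smooth_on U (D c F).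
Proof. intros HS l x y H. rewrite Dl_app. now apply HS. Qed.

Lemma Derive_of_derivable_pt_lim f x a :
  derivable_pt_lim f x a -> Coquelicot.Derive.Derive f x = a.
Proof.
  intro H. apply Coquelicot.Derive.is_derive_unique.
  now apply Coquelicot.Derive.is_derive_Reals.
Qed.

Lemma ex_derive_of_derivable_pt_lim f x a : derivable_pt_lim f x a ->
  @Coquelicot.Derive.ex_derive Coquelicot.Hierarchy.R_AbsRing
    Coquelicot.Hierarchy.R_NormedModule f x.
Proof. intro H. exists a. now apply Coquelicot.Derive.is_derive_Reals. Qed.

Lemma locally_of_ball (x r : R) (P : R -> Prop) : 0 < r ->
  (forall z, Rabs (z - x) < r -> P z) ->
  @Coquelicot.Hierarchy.locally Coquelicot.Hierarchy.R_UniformSpace x P.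
Proof. intros Hr HP. exists (mkposreal r Hr). exact HP. Qed.

Lemma continuity_2d_pt_of_continuous2_at G x y :
  continuous2_at G x y -> Coquelicot.Continuity.continuity_2d_pt G x y.
Proof.
  intros H eps. destruct (H eps (cond_pos eps)) as [d [Hd Hdd]].
  exists (mkposreal d Hd). exact Hdd.
Qed.

Section Smooth.
Variable U : R -> R -> Prop.
Variable F : R -> R -> R.
Hypothesis HU : open2 U.
Hypothesis HS : smooth_on U F.

Lemma smooth_pderiv_lim_Dl l i x y : U x y -> pderiv_lim i (Dl l F) x y (D i (Dl l F) x y).
Proof.
  intro Hxy. destruct (HS l x y Hxy) as [[a Ha] [[b Hb] _]].
  destruct i; [rewrite (pderiv_lim_D i1 _ _ _ a) | rewrite (pderiv_lim_D i2 _ _ _ b)]; assumption.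
Qed.

Lemma smooth_pderiv_lim i x y : U x y -> pderiv_lim i F x y (D i F x y).
Proof. exact (smooth_pderiv_lim_Dl nil i x y). Qed.

Lemma smooth_pderiv_lim_D i j x y : U x y -> pderiv_lim i (D j F) x y (D i (D j F) x y).
Proof. exact (smooth_pderiv_lim_Dl (j :: nil) i x y). Qed.

Lemma smooth_pderiv_lim_DD i j k x y :
  U x y -> pderiv_lim i (D j (D k F)) x y (D i (D j (D k F)) x y).
Proof. exact (smooth_pderiv_lim_Dl (j :: k :: nil) i x y). Qed.

Lemma smooth_continuity_2d_pt_D i x y :
  U x y -> Coquelicot.Continuity.continuity_2d_pt (D i F) x y.
Proof.
  intro Hxy. apply continuity_2d_pt_of_continuous2_at.
  exact (proj2 (proj2 (HS (cons i nil) x y Hxy))).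
Qed.

Lemma Derive_Derive_i1_i2 u v : U u v ->
  Coquelicot.Derive.Derive (fun z => Coquelicot.Derive.Derive (fun t => F z t) v) u
  = D i1 (D i2 F) u v.
Proof.
  intro Huv. destruct (HU u v Huv) as [r [Hr Hn]].
  rewrite (Coquelicot.Derive.Derive_ext_loc _ (fun z => D i2 F z v)).
  - apply Derive_of_derivable_pt_lim, (smooth_pderiv_lim_D i1 i2), Huv.
  - apply (locally_of_ball u r); auto. intros z Hz.
    apply Derive_of_derivable_pt_lim, (smooth_pderiv_lim i2).
    apply Hn; auto. rewrite Rminus_diag, Rabs_R0; auto.
Qed.

Lemma Derive_Derive_i2_i1 u v : U u v ->
  Coquelicot.Derive.Derive (fun z => Coquelicot.Derive.Derive (fun t => F t z) u) v
  = D i2 (D i1 F) u v.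
Proof.
  intro Huv. destruct (HU u v Huv) as [r [Hr Hn]].
  rewrite (Coquelicot.Derive.Derive_ext_loc _ (fun z => D i1 F u z)).
  - apply Derive_of_derivable_pt_lim, (smooth_pderiv_lim_D i2 i1), Huv.
  - apply (locally_of_ball v r); auto. intros z Hz.
    apply Derive_of_derivable_pt_lim, (smooth_pderiv_lim i1).
    apply Hn; auto. rewrite Rminus_diag, Rabs_R0; auto.
Qed.

Lemma ex_derive_slice_i1 u v : U u v ->
  @Coquelicot.Derive.ex_derive Coquelicot.Hierarchy.R_AbsRing
    Coquelicot.Hierarchy.R_NormedModule
    (fun z => Coquelicot.Derive.Derive (fun t => F z t) v) u.
Proof.
  intro Huv. destruct (HU u v Huv) as [r [Hr Hn]].
  apply (@Coquelicot.Derive.ex_derive_ext_loc Coquelicot.Hierarchy.R_AbsRing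
    Coquelicot.Hierarchy.R_NormedModule (fun z => D i2 F z v)).
  - apply (locally_of_ball u r); auto. intros z Hz. symmetry.
    apply Derive_of_derivable_pt_lim, (smooth_pderiv_lim i2).
    apply Hn; auto. rewrite Rminus_diag, Rabs_R0; auto.
  - exact (ex_derive_of_derivable_pt_lim _ _ _ (smooth_pderiv_lim_D i1 i2 u v Huv)).
Qed.

Lemma ex_derive_slice_i2 u v : U u v ->
  @Coquelicot.Derive.ex_derive Coquelicot.Hierarchy.R_AbsRing
    Coquelicot.Hierarchy.R_NormedModule
    (fun z => Coquelicot.Derive.Derive (fun t => F t z) u) v.
Proof.
  intro Huv. destruct (HU u v Huv) as [r [Hr Hn]].
  apply (@Coquelicot.Derive.ex_derive_ext_loc Coquelicot.Hierarchy.R_AbsRing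
    Coquelicot.Hierarchy.R_NormedModule (fun z => D i1 F u z)).
  - apply (locally_of_ball v r); auto. intros z Hz. symmetry.
    apply Derive_of_derivable_pt_lim, (smooth_pderiv_lim i1).
    apply Hn; auto. rewrite Rminus_diag, Rabs_R0; auto.
  - exact (ex_derive_of_derivable_pt_lim _ _ _ (smooth_pderiv_lim_D i2 i1 u v Huv)).
Qed.

Lemma D_i2_i1 x y : U x y -> D i2 (D i1 F) x y = D i1 (D i2 F) x y.
Proof.
  intro Hxy. rewrite <- (Derive_Derive_i1_i2 x y Hxy), <- (Derive_Derive_i2_i1 x y Hxy).
  destruct (HU x y Hxy) as [r [Hr Hn]].
  symmetry; apply Coquelicot.Derive_2d.Schwarz.
  - exists (mkposreal r Hr). intros u v Hu Hv.
    assert (Huv : U u v) by (apply Hn; auto).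
    repeat split.
    + exact (ex_derive_of_derivable_pt_lim _ _ _ (smooth_pderiv_lim i1 u v Huv)).
    + exact (ex_derive_of_derivable_pt_lim _ _ _ (smooth_pderiv_lim i2 u v Huv)).
    + exact (ex_derive_slice_i1 u v Huv).
    + exact (ex_derive_slice_i2 u v Huv).
  - apply (Coquelicot.Continuity.continuity_2d_pt_ext_loc (D i1 (D i2 F))).
    + exists (mkposreal r Hr). intros u v Hu Hv. symmetry.
      apply Derive_Derive_i1_i2, Hn; auto.
    + apply continuity_2d_pt_of_continuous2_at, (HS (cons i1 (cons i2 nil))), Hxy.
  - apply (Coquelicot.Continuity.continuity_2d_pt_ext_loc (D i2 (D i1 F))).
    + exists (mkposreal r Hr). intros u v Hu Hv. symmetry.
      apply Derive_Derive_i2_i1, Hn; auto.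
    + apply continuity_2d_pt_of_continuous2_at, (HS (cons i2 (cons i1 nil))), Hxy.
Qed.

Lemma D_D_i2_i1 c x y : U x y -> D c (D i2 (D i1 F)) x y = D c (D i1 (D i2 F)) x y.
Proof.
  intro Hxy. apply pderiv_lim_D, (pderiv_lim_ext_near c _ (D i1 (D i2 F))).
  - eapply near_mono; [exact (HU x y Hxy) | exact D_i2_i1].
  - now apply smooth_pderiv_lim_DD.
Qed.

End Smooth.

(* Normal forms of third-order partials: all [i1] derivatives outermost. *)
Section Smooth3.
Variable U : R -> R -> Prop.
Variable F : R -> R -> R.
Hypothesis HU : open2 U.
Hypothesis HS : smooth_on U F.

Lemma D_i1_i2_i1 x y : U x y -> D i1 (D i2 (D i1 F)) x y = D i1 (D i1 (D i2 F)) x y.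
Proof. exact (D_D_i2_i1 U F HU HS i1 x y). Qed.

Lemma D_i2_i1_i1 x y : U x y -> D i2 (D i1 (D i1 F)) x y = D i1 (D i1 (D i2 F)) x y.
Proof.
  intro Hxy. rewrite <- D_i1_i2_i1 by exact Hxy.
  exact (D_i2_i1 U (D i1 F) HU (smooth_on_D U F i1 HS) x y Hxy).
Qed.

Lemma D_i2_i1_i2 x y : U x y -> D i2 (D i1 (D i2 F)) x y = D i1 (D i2 (D i2 F)) x y.
Proof. exact (D_i2_i1 U (D i2 F) HU (smooth_on_D U F i2 HS) x y). Qed.

Lemma D_i2_i2_i1 x y : U x y -> D i2 (D i2 (D i1 F)) x y = D i1 (D i2 (D i2 F)) x y.
Proof.
  intro Hxy. rewrite (D_D_i2_i1 U F HU HS i2 x y Hxy). now apply D_i2_i1_i2.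
Qed.

End Smooth3.

Lemma quad_form_posdef_eq0 g11 g12 g22 a b :
  0 <= g11 -> 0 < g11 * g22 - g12 ^ 2 ->
  g11 * a * a + g12 * a * b + g12 * b * a + g22 * b * b = 0 -> a = 0 /\ b = 0.
Proof.
  intros H11 Hdet Hq.
  assert (Hpos : 0 < g11) by (destruct H11 as [|<-]; [assumption | nra]).
  assert (E : g11 * (g11 * a * a + g12 * a * b + g12 * b * a + g22 * b * b) =
              (g11 * a + g12 * b) ^ 2 + (g11 * g22 - g12 ^ 2) * b ^ 2) by ring.
  rewrite Hq, Rmult_0_r in E.
  pose proof (pow2_ge_0 (g11 * a + g12 * b)). pose proof (pow2_ge_0 b).
  assert (Hb2 : b ^ 2 = 0) by nra.
  assert (Hb : b = 0)
    by (destruct (Req_dec b 0) as [|Hb0]; [assumption | now destruct (pow_nonzero b 2 Hb0)]).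
  subst b.
  assert (Ha : g11 * a = 0) by nra.
  apply Rmult_integral in Ha. split; [destruct Ha; lra | reflexivity].
Qed.

Section TranslatingSoliton.
Variable U : R -> R -> Prop.
Variable f : surf.
Hypothesis HU : open2 U.
Hypothesis HS : forall k, smooth_on U (f k).
Hypothesis HI : immersion_on U f.
Hypothesis HT : translating_soliton_on U f.

Ltac pderiv_atom := first
  [ apply (smooth_pderiv_lim_DD U _ (HS _))
  | apply (smooth_pderiv_lim_D U _ (HS _))
  | apply (smooth_pderiv_lim U _ (HS _)) ]; assumption.

Ltac sort_partials Hxy :=
  rewrite ?(D_i2_i1 U (f _) HU (HS _) _ _ Hxy), ?(D_i1_i2_i1 U (f _) HU (HS _) _ _ Hxy),
    ?(D_i2_i1_i1 U (f _) HU (HS _) _ _ Hxy), ?(D_i2_i1_i2 U (f _) HU (HS _) _ _ Hxy),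
    ?(D_i2_i2_i1 U (f _) HU (HS _) _ _ Hxy).

Definition dmetric (c a b : ix) (x y : R) :=
  dot3 (fun k => D c (D a (f k)) x y) (fun k => D b (f k) x y) +
  dot3 (fun k => D a (f k) x y) (fun k => D c (D b (f k)) x y).

Lemma pderiv_lim_metric a b c x y : U x y -> pderiv_lim c (metric f a b) x y (dmetric c a b x y).
Proof.
  intro Hxy. unfold metric, dmetric, dot3, sum3. eapply pderiv_lim_eq.
  - repeat (first [pderiv_rule | pderiv_atom]).
  - cbv beta. ring.
Qed.

Definition ddmetric (c a b d : ix) (x y : R) :=
  dot3 (fun k => D c (D a (D b (f k))) x y) (fun k => D d (f k) x y) +
  dot3 (fun k => D a (D b (f k)) x y) (fun k => D c (D d (f k)) x y) +
  dot3 (fun k => D c (D b (f k)) x y) (fun k => D a (D d (f k)) x y) +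
  dot3 (fun k => D b (f k) x y) (fun k => D c (D a (D d (f k))) x y).

Lemma pderiv_lim_D_metric a b d c x y :
  U x y -> pderiv_lim c (D a (metric f b d)) x y (ddmetric c a b d x y).
Proof.
  intro Hxy. apply (pderiv_lim_ext_near c _ (dmetric a b d)).
  - eapply near_mono; [exact (HU x y Hxy)|].
    intros u v Huv. apply pderiv_lim_D, pderiv_lim_metric, Huv.
  - unfold dmetric, ddmetric, dot3, sum3. eapply pderiv_lim_eq.
    + repeat (first [pderiv_rule | pderiv_atom]).
    + cbv beta. ring.
Qed.

Ltac pderiv_auto := repeat first
  [ pderiv_rule | pderiv_atom
  | apply pderiv_lim_metric; assumption | apply pderiv_lim_D_metric; assumption ].

Ltac rewrite_D_chr := match goal with
 | |- context [D ?c (chr ?f ?l ?j ?k) ?x ?y] =>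
   let Hd := fresh in
   eassert (Hd : pderiv_lim c (chr f l j k) x y _);
   [ cbv beta iota delta [chr sum2 ginv gdet]; pderiv_auto; cbv beta; try assumption
   | rewrite (pderiv_lim_D _ _ _ _ _ Hd); clear Hd ]
 end.

Definition sff_raw (i j : ix) (x y : R) :=
  dot3 (fun k => D i (D j (f k)) x y) (fun k => normal_raw f k x y).

Lemma gauss_curv_sff_raw x y : U x y -> gdet f x y <> 0 ->
  gauss_curv f x y =
  (sff_raw i1 i1 x y * sff_raw i2 i2 x y - sff_raw i1 i2 x y ^ 2) / (gdet f x y * gdet f x y).
Proof.
  intros Hxy Hg.
  unfold gauss_curv, riem, sum2; cbv beta.
  do 4 rewrite_D_chr.
  cbv beta iota delta [chr sum2 ginv].
  rewrite !(fun a b c => pderiv_lim_D _ _ _ _ _ (pderiv_lim_metric a b c x y Hxy)).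
  unfold gdet in *. unfold sff_raw, ddmetric, dmetric, metric, normal_raw, dot3, sum3, cross3 in *.
  cbv beta. sort_partials Hxy.
  field. exact Hg.
Qed.

Definition normal_sq (x y : R) := dot3 (fun k => normal_raw f k x y) (fun k => normal_raw f k x y).

Lemma gdet_normal_sq x y : gdet f x y = normal_sq x y.
Proof. unfold gdet, normal_sq, metric, normal_raw, dot3, sum3, cross3. ring. Qed.

Lemma normal_sq_pos x y : U x y -> 0 < normal_sq x y.
Proof.
  intro Hxy. apply Rnot_le_lt. intro Hle. apply (HI x y Hxy).
  unfold normal_sq, dot3, sum3 in Hle. intros []; nra.
Qed.

Lemma gdet_pos x y : U x y -> 0 < gdet f x y.
Proof. intro Hxy. rewrite gdet_normal_sq. now apply normal_sq_pos. Qed.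

Lemma sqrt_normal_sq_pos x y : U x y -> 0 < sqrt (normal_sq x y).
Proof. intro Hxy. now apply sqrt_lt_R0, normal_sq_pos. Qed.

Definition dnormal (c : ix) (k : i3) (x y : R) :=
  cross3 (fun m => D c (D i1 (f m)) x y) (fun m => D i2 (f m) x y) k +
  cross3 (fun m => D i1 (f m) x y) (fun m => D c (D i2 (f m)) x y) k.

Lemma pderiv_lim_normal_raw c k x y : U x y -> pderiv_lim c (normal_raw f k) x y (dnormal c k x y).
Proof.
  intro Hxy. unfold normal_raw, dnormal, cross3.
  destruct k; (eapply pderiv_lim_eq; [pderiv_auto | cbv beta; ring]).
Qed.

Lemma pderiv_lim_normal_sq c x y : U x y ->
  pderiv_lim c normal_sq x y (2 * dot3 (fun k => normal_raw f k x y) (fun k => dnormal c k x y)).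
Proof.
  intro Hxy. unfold normal_sq, dot3, sum3. eapply pderiv_lim_eq.
  - repeat first [apply pderiv_lim_normal_raw, Hxy | apply pderiv_lim_plus | apply pderiv_lim_mult].
  - ring.
Qed.

Definition dxi3_num (c : ix) (x y : R) :=
  dnormal c c3 x y -
  normal_raw f c3 x y * dot3 (fun k => normal_raw f k x y) (fun k => dnormal c k x y) / gdet f x y.

Lemma pderiv_lim_unit_normal3 c x y : U x y ->
  pderiv_lim c (unit_normal f c3) x y (dxi3_num c x y / sqrt (normal_sq x y)).
Proof.
  intro Hxy. pose proof (normal_sq_pos x y Hxy) as Hpos.
  pose proof (sqrt_normal_sq_pos x y Hxy) as Hs.
  eapply pderiv_lim_eq.
  - apply pderiv_lim_div; [apply pderiv_lim_normal_raw, Hxy | | fold (normal_sq x y); lra].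
    apply pderiv_lim_sqrt; [apply pderiv_lim_normal_sq, Hxy | exact Hpos].
  - cbv beta. fold (normal_sq x y). unfold dxi3_num. rewrite gdet_normal_sq.
    pose proof (sqrt_sqrt (normal_sq x y) (Rlt_le _ _ Hpos)) as Hss.
    set (s := sqrt (normal_sq x y)) in *. rewrite <- Hss.
    field. lra.
Qed.

Definition mean_curv_num (x y : R) := - sum2 (fun i => sum2 (fun j => ginv f i j x y *
  dot3 (fun k => D i (D j (f k)) x y) (fun k => normal_raw f k x y))).

Lemma mean_curv_num_eq x y : U x y -> mean_curv f x y = mean_curv_num x y / sqrt (normal_sq x y).
Proof.
  intro Hxy. pose proof (sqrt_normal_sq_pos x y Hxy).
  unfold mean_curv, sff, unit_normal. fold (normal_sq x y).
  unfold mean_curv_num, sum2, dot3, sum3. field. lra.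
Qed.

(* The soliton equation H = -xi_3 turns derivatives of H into derivatives of the normal. *)
Lemma pderiv_lim_mean_curv c x y : U x y ->
  pderiv_lim c (mean_curv f) x y (- (dxi3_num c x y / sqrt (normal_sq x y))).
Proof.
  intro Hxy. apply (pderiv_lim_ext_near c _ (fun u v => - unit_normal f c3 u v)).
  - eapply near_mono; [exact (HU x y Hxy) | exact HT].
  - apply pderiv_lim_opp, pderiv_lim_unit_normal3, Hxy.
Qed.

Lemma D_mean_curv c x y : U x y -> D c (mean_curv f) x y = - (dxi3_num c x y / sqrt (normal_sq x y)).
Proof. intro Hxy. apply pderiv_lim_D, pderiv_lim_mean_curv, Hxy. Qed.

Definition grad_mean_curv_num (i : ix) (x y : R) := sum2 (fun j => ginv f i j x y * - dxi3_num j x y).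

Lemma grad_mean_curv_eq i x y : U x y ->
  grad f (mean_curv f) i x y = grad_mean_curv_num i x y / sqrt (normal_sq x y).
Proof.
  intro Hxy. pose proof (sqrt_normal_sq_pos x y Hxy).
  unfold grad, grad_mean_curv_num, sum2. rewrite !D_mean_curv by exact Hxy. field. lra.
Qed.

Definition grad_height_sq (x y : R) := inner f (grad f (height f)) (grad f (height f)) x y.

Definition Wfield_num (i : ix) (x y : R) :=
  - (grad_mean_curv_num i x y + mean_curv_num x y * grad f (height f) i x y) / grad_height_sq x y.

Lemma Wfield_num_eq i x y : U x y -> Wfield f i x y = Wfield_num i x y / sqrt (normal_sq x y).
Proof.
  intro Hxy. unfold Wfield.
  rewrite grad_mean_curv_eq, mean_curv_num_eq by exact Hxy.
  unfold Wfield_num, grad_height_sq, Rdiv. ring.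
Qed.

Definition normal12_sq (x y : R) :=
  normal_raw f Defs.c1 x y * normal_raw f Defs.c1 x y + normal_raw f c2 x y * normal_raw f c2 x y.

(* [dangle12 j] is the partial derivative d_j of the angle of the vector (N_1, N_2). *)
Definition dangle12 (j : ix) (x y : R) :=
  (normal_raw f Defs.c1 x y * dnormal j c2 x y - normal_raw f c2 x y * dnormal j Defs.c1 x y)
  / normal12_sq x y.

Lemma grad_height_sq_gdet x y : U x y -> grad_height_sq x y * gdet f x y = normal12_sq x y.
Proof.
  intro Hxy. pose proof (gdet_pos x y Hxy).
  unfold grad_height_sq, normal12_sq, inner, grad, height, ginv, sum2. unfold gdet in *.
  unfold metric, normal_raw, dot3, sum3, cross3 in *. field. lra.
Qed.

Lemma grad_height_sq_neq0 x y : U x y ->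
  ~ (grad f (height f) i1 x y = 0 /\ grad f (height f) i2 x y = 0) -> grad_height_sq x y <> 0.
Proof.
  intros Hxy Hgrad E. apply Hgrad. pose proof (gdet_pos x y Hxy) as Hg.
  unfold grad_height_sq, inner, sum2 in E. unfold gdet in Hg.
  assert (Hsym : metric f i2 i1 x y = metric f i1 i2 x y) by (unfold metric, dot3, sum3; ring).
  rewrite Hsym in E.
  apply (quad_form_posdef_eq0 (metric f i1 i1 x y) (metric f i1 i2 x y) (metric f i2 i2 x y)).
  - unfold metric, dot3, sum3. nra.
  - exact Hg.
  - rewrite <- E. ring.
Qed.

Lemma normal12_sq_neq0 x y : U x y -> grad_height_sq x y <> 0 -> normal12_sq x y <> 0.
Proof.
  intros Hxy Hgrad. pose proof (gdet_pos x y Hxy). rewrite <- grad_height_sq_gdet by exact Hxy.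
  apply Rmult_integral_contrapositive_currified; lra.
Qed.

(* After full unfolding, the side conditions of [field] are products of [gdet] and [normal12_sq]. *)
Ltac solve_denominator Hg Hr := match goal with |- ?P <> 0 =>
  match type of Hg with 0 < ?G => match type of Hr with ?N <> 0 =>
    first [ replace P with (G * N) by ring | replace P with (G * G * N) by ring
          | replace P with (G * G * G * N) by ring ];
    repeat apply Rmult_integral_contrapositive_currified; try exact Hr; lra end end end.

Lemma Wfield_num_rot x y : U x y -> normal12_sq x y <> 0 ->
  Wfield_num i1 x y = dangle12 i2 x y /\ Wfield_num i2 x y = - dangle12 i1 x y.
Proof.
  intros Hxy Hr. pose proof (gdet_pos x y Hxy) as Hg.
  assert (Hgrad : grad_height_sq x y <> 0).
  { intro E. apply Hr. rewrite <- grad_height_sq_gdet, E by exact Hxy. ring. }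
  unfold Wfield_num, dangle12, grad_mean_curv_num, dxi3_num, mean_curv_num, normal12_sq in *.
  unfold grad_height_sq in *. unfold grad, inner, height, ginv, sum2 in *. unfold gdet in *.
  unfold dnormal, metric, normal_raw, dot3, sum3, cross3 in *.
  sort_partials Hxy.
  split; field; repeat split; try assumption; try lra.
  all: solve_denominator Hg Hr.
Qed.

Lemma normal12_sq_near_neq0 x y : U x y -> normal12_sq x y <> 0 ->
  near x y (fun u v => normal12_sq u v <> 0).
Proof.
  intros Hxy Hr.
  assert (Hcont : Coquelicot.Continuity.continuity_2d_pt normal12_sq x y).
  { unfold normal12_sq, normal_raw, cross3.
    repeat first [ apply Coquelicot.Continuity.continuity_2d_pt_minus
                 | apply Coquelicot.Continuity.continuity_2d_pt_plus
                 | apply Coquelicot.Continuity.continuity_2d_pt_mult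
                 | apply (smooth_continuity_2d_pt_D U _ (HS _)), Hxy ]. }
  destruct (Coquelicot.Continuity.continuity_2d_pt_neq_0 _ _ _ Hcont Hr) as [d Hd].
  exists d. split; [apply cond_pos | exact Hd].
Qed.

Definition Wfield_density (i : ix) (x y : R) := sqrt (gdet f x y) * Wfield f i x y.

Lemma Wfield_density_eq i x y : U x y -> Wfield_density i x y = Wfield_num i x y.
Proof.
  intro Hxy. pose proof (sqrt_normal_sq_pos x y Hxy).
  unfold Wfield_density. rewrite Wfield_num_eq, gdet_normal_sq by exact Hxy. field. lra.
Qed.

(* d_s d_t theta = d_t d_s theta *)
Lemma pderiv_lim_Wfield_density x y : U x y -> normal12_sq x y <> 0 ->
  exists a1 a2, pderiv_lim i1 (Wfield_density i1) x y a1 /\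
                pderiv_lim i2 (Wfield_density i2) x y a2 /\ a1 + a2 = 0.
Proof.
  intros Hxy Hr.
  assert (Hnear : near x y (fun u v => U u v /\ normal12_sq u v <> 0))
    by (apply near_and; [exact (HU x y Hxy) | now apply normal12_sq_near_neq0]).
  eexists; eexists; split; [|split].
  - apply (pderiv_lim_ext_near i1 _ (dangle12 i2)).
    + eapply near_mono; [exact Hnear|]. intros u v [Huv Hr'].
      rewrite Wfield_density_eq by exact Huv. now apply Wfield_num_rot.
    + unfold dangle12, dnormal, normal12_sq, normal_raw, cross3. pderiv_auto. cbv beta. exact Hr.
  - apply (pderiv_lim_ext_near i2 _ (fun u v => - dangle12 i1 u v)).
    + eapply near_mono; [exact Hnear|]. intros u v [Huv Hr'].
      rewrite Wfield_density_eq by exact Huv. now apply Wfield_num_rot.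
    + unfold dangle12, dnormal, normal12_sq, normal_raw, cross3. pderiv_auto. cbv beta. exact Hr.
  - cbv beta. unfold normal12_sq, normal_raw, cross3 in *. sort_partials Hxy.
    field. exact Hr.
Qed.

Lemma div_Wfield x y : U x y -> grad_height_sq x y <> 0 -> div f (Wfield f) x y = 0.
Proof.
  intros Hxy Hgrad.
  destruct (pderiv_lim_Wfield_density x y Hxy (normal12_sq_neq0 x y Hxy Hgrad))
    as [a1 [a2 [H1 [H2 H12]]]].
  unfold div, sum2.
  change (fun x' y' => sqrt (gdet f x' y') * Wfield f i1 x' y') with (Wfield_density i1).
  change (fun x' y' => sqrt (gdet f x' y') * Wfield f i2 x' y') with (Wfield_density i2).
  rewrite (pderiv_lim_D _ _ _ _ _ H1), (pderiv_lim_D _ _ _ _ _ H2), H12. ring.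
Qed.

Lemma inner_scale (X Y : vfield) X' Y' s x y : s <> 0 ->
  (forall i, X i x y = X' i / s) -> (forall i, Y i x y = Y' i / s) ->
  inner f X Y x y = sum2 (fun i => sum2 (fun j => metric f i j x y * X' i * Y' j)) / (s * s).
Proof. intros Hs HX HY. unfold inner, sum2. rewrite !HX, !HY. field. exact Hs. Qed.

Lemma gauss_curv_inner_grad_mean_curv x y : U x y -> grad_height_sq x y <> 0 ->
  gauss_curv f x y = inner f (grad f (mean_curv f)) (Wfield f) x y.
Proof.
  intros Hxy Hgrad. pose proof (sqrt_normal_sq_pos x y Hxy) as Hs.
  pose proof (gdet_pos x y Hxy) as Hg. pose proof (normal12_sq_neq0 x y Hxy Hgrad) as Hr.
  rewrite gauss_curv_sff_raw by (exact Hxy || lra).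
  rewrite (inner_scale _ _ (fun i => grad_mean_curv_num i x y) (fun i => Wfield_num i x y)
             (sqrt (normal_sq x y))); [| lra | intro; now apply grad_mean_curv_eq
                                             | intro; now apply Wfield_num_eq].
  rewrite sqrt_sqrt by (apply Rlt_le, normal_sq_pos, Hxy). rewrite <- gdet_normal_sq.
  clear Hs.
  unfold Wfield_num, grad_mean_curv_num, dxi3_num, mean_curv_num, normal12_sq, sff_raw in *.
  unfold grad_height_sq in *. unfold grad, inner, height, ginv, sum2 in *. unfold gdet in *.
  unfold dnormal, metric, normal_raw, dot3, sum3, cross3 in *.
  sort_partials Hxy.
  field; repeat split; try assumption; try lra.
  all: solve_denominator Hg Hr.
Qed.

Lemma gauss_curv_div_scal x y : U x y -> grad_height_sq x y <> 0 ->
  gauss_curv f x y = div f (scal (mean_curv f) (Wfield f)) x y.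
Proof.
  intros Hxy Hgrad. rewrite gauss_curv_inner_grad_mean_curv by assumption.
  destruct (pderiv_lim_Wfield_density x y Hxy (normal12_sq_neq0 x y Hxy Hgrad))
    as [a1 [a2 [H1 [H2 H12]]]].
  (* product rule: div (H W) = <grad H, W> + H div W *)
  assert (Hprod : forall i a, pderiv_lim i (Wfield_density i) x y a ->
     D i (fun x' y' => sqrt (gdet f x' y') * scal (mean_curv f) (Wfield f) i x' y') x y =
     - (dxi3_num i x y / sqrt (normal_sq x y)) * Wfield_density i x y + mean_curv f x y * a).
  { intros i a Ha. apply pderiv_lim_D.
    apply (pderiv_lim_ext i (fun u v => mean_curv f u v * Wfield_density i u v));
      [intros u v; unfold Wfield_density, scal; ring|].
    apply pderiv_lim_mult; [apply pderiv_lim_mean_curv, Hxy | exact Ha]. }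
  unfold div, sum2. rewrite (Hprod i1 a1 H1), (Hprod i2 a2 H2).
  replace a2 with (- a1) by lra.
  pose proof (sqrt_normal_sq_pos x y Hxy) as Hs. pose proof (gdet_pos x y Hxy) as Hg.
  unfold Wfield_density. rewrite !gdet_normal_sq.
  unfold inner, grad, sum2, ginv. rewrite !D_mean_curv by exact Hxy.
  assert (Hsym : metric f i2 i1 x y = metric f i1 i2 x y) by (unfold metric, dot3, sum3; ring).
  rewrite Hsym. unfold gdet in *.
  field. split; lra.
Qed.

Lemma Wfield_exp_form i x y : U x y -> grad_height_sq x y <> 0 ->
  Wfield f i x y =
  - grad f (fun x' y' => exp (height f x' y') * mean_curv f x' y') i x y
  / (exp (height f x y) * inner f (grad f (height f)) (grad f (height f)) x y).
Proof.
  intros Hxy Hgrad. pose proof (exp_pos (height f x y)).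
  assert (Hprod : forall j, D j (fun x' y' => exp (height f x' y') * mean_curv f x' y') x y =
    exp (height f x y) * (D j (height f) x y * mean_curv f x y + D j (mean_curv f) x y)).
  { intro j. apply pderiv_lim_D. eapply pderiv_lim_eq.
    - apply pderiv_lim_mult; [apply pderiv_lim_exp, (smooth_pderiv_lim U _ (HS c3)), Hxy
                             | apply pderiv_lim_mean_curv, Hxy].
    - rewrite (D_mean_curv j x y Hxy). unfold height. ring. }
  unfold Wfield, grad, sum2. rewrite !Hprod.
  unfold grad_height_sq, grad, sum2 in Hgrad.
  field; split; [exact Hgrad | lra].
Qed.

End TranslatingSoliton.

Theorem corollary4p6 (U : R -> R -> Prop) (f : surf) :
  open2 U ->
  (forall k, smooth_on U (f k)) ->
  immersion_on U f ->
  translating_soliton_on U f ->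
  forall x y, U x y ->
    ~ (grad f (height f) i1 x y = 0 /\ grad f (height f) i2 x y = 0) ->
    (forall i, Wfield f i x y =
        - grad f (fun x' y' => exp (height f x' y') * mean_curv f x' y') i x y
        / (exp (height f x y) *
           inner f (grad f (height f)) (grad f (height f)) x y)) /\
    div f (Wfield f) x y = 0 /\
    gauss_curv f x y = inner f (grad f (mean_curv f)) (Wfield f) x y /\
    gauss_curv f x y = div f (scal (mean_curv f) (Wfield f)) x y.
Proof.
  intros HU HS HI HT x y Hxy Hcrit.
  pose proof (grad_height_sq_neq0 U f HI x y Hxy Hcrit) as Hgrad.
  repeat split.
  - intro i. now apply (Wfield_exp_form U f HU HS HI HT).
  - now apply (div_Wfield U f HU HS HI HT).
  - now apply (gauss_curv_inner_grad_mean_curv U f HU HS HI HT).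
  - now apply (gauss_curv_div_scal U f HU HS HI HT).
Qed.
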